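(* Let $1\le p\le 2$, let $\rho>0$ and $\alpha\ge 0$ with $\alpha\le\frac{\pi}{2}-3\rho$, and set $\theta_2=\frac{\pi}{2}+\rho$, $\theta_3=2\rho+\alpha$. Define $E_p(\theta)=|\cos(\theta-\theta_2)|^p+|\cos(\theta-\theta_3)|^p$. Then for every $\theta=2\rho+\alpha+\beta$ with $0\le\beta\le\frac{\pi}{2}-3\rho-\alpha$ we have $E_p(\theta)\ge 1$. *)

From Stdlib Require Import Reals.
Open Scope R_scope.

(* |x|^p for real exponent p > 0, with the convention 0^p = 0. *)
Definition abspow (x p : R) : R :=
  if Req_EM_T x 0 then 0 else Rpower (Rabs x) p.

Definition Ep (p theta2 theta3 theta : R) : R :=
  abspow (cos (theta - theta2)) p + abspow (cos (theta - theta3)) p.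

(* Since |x|^p >= x^2 whenever |x| <= 1 and p <= 2, after shifting angles
   E_p(theta) >= sin^2 (rho + alpha + beta) + cos^2 beta.  As
   beta <= rho + alpha + beta <= pi/2 and sin is increasing there, this is at
   least sin^2 beta + cos^2 beta = 1. *)

From Stdlib Require Import Reals Lra.
Open Scope R_scope.

Lemma exp_le_exp (x y : R) : x <= y -> exp x <= exp y.
Proof.
  intros [lt | ->]; [left; apply exp_increasing | right]; easy.
Qed.

Lemma ln_le_0 (x : R) : 0 < x <= 1 -> ln x <= 0.
Proof.
  intros [x_gt0 [x_lt1 | ->]].
  - rewrite <- ln_1. left. now apply ln_increasing.
  - rewrite ln_1. apply Rle_refl.
Qed.

Lemma Rpower_le_exponent_contra (x a b : R) :
  0 < x <= 1 -> a <= b -> Rpower x b <= Rpower x a.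
Proof.
  intros hx hab. unfold Rpower. apply exp_le_exp.
  rewrite !(Rmult_comm _ (ln x)).
  now apply Rmult_le_compat_neg_l; [apply ln_le_0 |].
Qed.

Lemma sqr_le_abspow (x p : R) : Rabs x <= 1 -> p <= 2 -> x ^ 2 <= abspow x p.
Proof.
  intros hx hp. unfold abspow.
  destruct (Req_EM_T x 0) as [-> | x_neq0].
  - simpl. lra.
  - assert (abs_gt0 : 0 < Rabs x) by now apply Rabs_pos_lt.
    rewrite <- pow2_abs, <- (Rpower_pow 2 (Rabs x) abs_gt0).
    apply Rpower_le_exponent_contra; [lra | exact hp].
Qed.

Lemma Ep_ge_sum_sqr (p theta2 theta3 theta : R) : p <= 2 ->
  cos (theta - theta2) ^ 2 + cos (theta - theta3) ^ 2 <= Ep p theta2 theta3 theta.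
Proof.
  intros hp. unfold Ep.
  apply Rplus_le_compat; apply sqr_le_abspow; auto using COS_bound, Rabs_le.
Qed.

Lemma sin_sqr_le (x y : R) : 0 <= x -> x <= y -> y <= PI / 2 ->
  sin x ^ 2 <= sin y ^ 2.
Proof.
  intros x_ge0 xy y_le.
  assert (sin_x_ge0 : 0 <= sin x) by (apply sin_ge_0; lra).
  assert (sin_le : sin x <= sin y) by (apply sin_incr_1; lra).
  apply pow_incr. lra.
Qed.

Theorem lemma2p11 (p rho alpha beta : R)
  (hp1 : 1 <= p) (hp2 : p <= 2)
  (hrho : 0 < rho) (halpha0 : 0 <= alpha) (halpha : alpha <= PI / 2 - 3 * rho)
  (hbeta0 : 0 <= beta) (hbeta : beta <= PI / 2 - 3 * rho - alpha) :
  Ep p (PI / 2 + rho) (2 * rho + alpha) (2 * rho + alpha + beta) >= 1.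
Proof.
  apply Rle_ge.
  eapply Rle_trans; [| now apply Ep_ge_sum_sqr].
  replace (2 * rho + alpha + beta - (PI / 2 + rho))
    with (- (PI / 2 - (rho + alpha + beta))) by ring.
  replace (2 * rho + alpha + beta - (2 * rho + alpha)) with beta by ring.
  rewrite cos_neg, cos_shift.
  assert (sin_le : sin beta ^ 2 <= sin (rho + alpha + beta) ^ 2).
  { apply sin_sqr_le; lra. }
  pose proof (sin2_cos2 beta) as pythagoras. unfold Rsqr in pythagoras.
  simpl in *. lra.
Qed.
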